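(* If an analytic function $f(z)=\sum_{n\ge0}f_nz^n$ on $\mathbb{D}$ satisfies $\sup_{n\ge0}|f_n|e^{c\sqrt n}<\infty$ for some $c>0$, then for every $h\in H^\infty$ the function $T_{\overline h}f$ also satisfies $\sup_{n\ge0}|(T_{\overline h}f)_n|e^{c''\sqrt n}<\infty$ for some $c''>0$, where $(T_{\overline h}f)_n$ are its Taylor coefficients.
   Context: $H^\infty$ is the algebra of bounded analytic functions on $\mathbb{D}$. For $h\in H^\infty$ and $f\in H^2$, $T_{\overline h}f=P_+(\overline hf)$, where $P_+:L^2(\mathbb{T})\to H^2$ is the orthogonal projection onto the Hardy space (such $f$ lies in $H^2$). *)

From Stdlib Require Import Reals.
From Coquelicot Require Import Coquelicot.
Open Scope R_scope.

Definition in_disc (z : Complex.C) : Prop := Cmod z < 1.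

(* A function analytic on the disc is represented by its Taylor coefficients
   a : nat -> C; its value at z is the sum of the power series. *)
Definition ps_sum (a : nat -> Complex.C) (z : Complex.C) (s : Complex.C) : Prop :=
  is_series (fun k => Cmult (a k) (pow_n z k)) s.

Definition analytic_on_disc (a : nat -> Complex.C) : Prop :=
  forall z, in_disc z -> exists s, ps_sum a z s.

Definition Hinf (h : nat -> Complex.C) : Prop :=
  analytic_on_disc h /\
  exists B : R, forall z s, in_disc z -> ps_sum h z s -> Cmod s <= B.

(* Taylor coefficients of T_{conj h} f = P_+(conj(h) f): the n-th Fourier
   coefficient of conj(h) f on the circle, i.e. <f, z^n h>_{L^2(T)}
   = sum_{k>=0} conj(h_k) f_{n+k}. *)
Definition toeplitz_coef (h f : nat -> Complex.C) (n : nat) (v : Complex.C) : Prop :=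
  is_series (fun k => Cmult (Cconj (h k)) (f (n + k)%nat)) v.

Definition subexp_decay (a : nat -> Complex.C) (c : R) : Prop :=
  exists M : R, forall n : nat, Cmod (a n) * exp (c * sqrt (INR n)) <= M.

(* The Taylor coefficients of a bounded analytic function h are bounded by sup |h|:
   averaging e^{-ikt} h(r e^{it}) over the (n+1)-th roots of unity e^{it} gives
   (n+1) h_k r^k plus a combination of the h_m r^m with m > n, bounded by (n+1) times
   their tail sum, which vanishes as n grows; hence |h_k| r^k <= sup |h| for r < 1,
   and r -> 1 gives |h_k| <= sup |h|.  If |f_m| <= M e^{-c sqrt m}, then
   |(T_{conj h} f)_n| <= sum_k |h_k| |f_(n+k)| <= sup |h| M sum_k e^{-c sqrt (n+k)},
   and sqrt n + sqrt k <= 2 sqrt (n + k) bounds this by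
   sup |h| M e^{-(c/2) sqrt n} sum_k e^{-(c/2) sqrt k}, a convergent series. *)

From Stdlib Require Import Reals Lra Lia Arith.
From Stdlib Require Import IndefiniteDescription.
From Coquelicot Require Import Coquelicot.
Open Scope R_scope.

Lemma Cmod_sum_n_le (a : nat -> C) (b : nat -> R) (n : nat) :
  (forall k, Cmod (a k) <= b k) -> Cmod (sum_n a n) <= sum_n b n.
Proof.
  intros Hab; induction n as [|n IH].
  - rewrite !sum_O; apply Hab.
  - rewrite !sum_Sn; eapply Rle_trans; [apply Cmod_triangle |].
    apply Rplus_le_compat; [exact IH | apply Hab].
Qed.

Lemma is_series_Cmod_le (a : nat -> C) (b : nat -> R) (la : C) (lb : R) :
  is_series a la -> is_series b lb -> (forall n, Cmod (a n) <= b n) -> Cmod la <= lb.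
Proof.
  intros Ha Hb Hab.
  assert (Hnorm : is_lim_seq (fun n => Cmod (sum_n a n)) (Cmod la)).
  { exact (filterlim_comp _ _ _ (sum_n a) (@norm _ C_NormedModule) _ _ _ Ha
             (filterlim_norm la)). }
  assert (Hsum : is_lim_seq (sum_n b) lb) by exact Hb.
  exact (is_lim_seq_le _ _ _ _ (fun n => Cmod_sum_n_le a b n Hab) Hnorm Hsum).
Qed.

Lemma is_series_Cmod_bounded (a : nat -> C) (l : C) :
  is_series a l -> exists K, forall n, Cmod (a n) <= K.
Proof.
  intros Ha.
  destruct (filterlim_bounded (sum_n a) (ex_intro _ l Ha)) as [M HM].
  exists (2 * M); intros [|n].
  - specialize (HM 0%nat); rewrite sum_O in HM.
    pose proof (Cmod_ge_0 (a 0%nat)); change (Cmod (a 0%nat) <= M) in HM; lra.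
  - replace (a (S n)) with (sum_n a (S n) - sum_n a n)%C
      by (rewrite sum_Sn; change plus with Cplus; ring).
    eapply Rle_trans; [apply (Cmod_triangle _ (- _)) |]; rewrite Cmod_opp.
    pose proof (HM (S n)); pose proof (HM n); change norm with Cmod in *; lra.
Qed.

Lemma is_series_sum_n {K : AbsRing} {V : NormedModule K}
  (a : nat -> nat -> V) (l : nat -> V) (n : nat) :
  (forall j, is_series (a j) (l j)) ->
  is_series (fun m => sum_n (fun j => a j m) n) (sum_n l n).
Proof.
  intros Ha; induction n as [|n IH].
  - rewrite sum_O; eapply is_series_ext; [| apply Ha]; intros m; now rewrite sum_O.
  - rewrite sum_Sn; eapply is_series_ext; [| apply (is_series_plus _ _ _ _ IH (Ha (S n)))].
    intros m; now rewrite sum_Sn.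
Qed.

Lemma sum_n_single {G : AbelianMonoid} (a : nat -> G) (n k : nat) : (k <= n)%nat ->
  (forall m, (m <= n)%nat -> m <> k -> a m = zero) -> sum_n a n = a k.
Proof.
  intros Hkn Ha.
  assert (Hsum : forall p, (p <= n)%nat -> sum_n a p = if le_lt_dec k p then a k else zero).
  { induction p as [|p IH]; intros Hp.
    - rewrite sum_O; destruct (le_lt_dec k 0); [f_equal; lia | apply Ha; lia].
    - rewrite sum_Sn, IH by lia.
      destruct (le_lt_dec k p), (le_lt_dec k (S p)); try lia.
      + rewrite (Ha (S p)) by lia; apply plus_zero_r.
      + replace (S p) with k by lia; apply plus_zero_l.
      + rewrite (Ha (S p)) by lia; apply plus_zero_r. }
  rewrite Hsum by lia; destruct (le_lt_dec k n); [reflexivity | lia].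
Qed.

Lemma sum_n_Cmult_l (a : C) (u : nat -> C) (n : nat) :
  sum_n (fun j => (a * u j)%C) n = (a * sum_n u n)%C.
Proof. exact (sum_n_mult_l (K := C_Ring) a u n). Qed.

Lemma sum_n_RtoC (b : nat -> R) (n : nat) :
  sum_n (fun j => RtoC (b j)) n = RtoC (sum_n b n).
Proof.
  induction n as [|n IH]; rewrite ?sum_O, ?sum_Sn; [reflexivity |].
  rewrite IH; symmetry; apply RtoC_plus.
Qed.

Definition cis (t : R) : C := (cos t, sin t).

Lemma cis_add s t : cis (s + t) = (cis s * cis t)%C.
Proof. unfold cis, Cmult; simpl; rewrite cos_plus, sin_plus; f_equal; ring. Qed.

Lemma cis_0 : cis 0 = 1%C.
Proof. unfold cis; rewrite cos_0, sin_0; reflexivity. Qed.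

Lemma Cmod_cis t : Cmod (cis t) = 1.
Proof.
  unfold Cmod, cis; simpl.
  replace (_ + _) with 1 by (pose proof (sin2_cos2 t); unfold Rsqr in *; nra).
  apply sqrt_1.
Qed.

Lemma Cpow_cis t m : (cis t ^ m)%C = cis (INR m * t).
Proof.
  induction m as [|m IH]; simpl Cpow.
  - now rewrite Rmult_0_l, cis_0.
  - rewrite IH, <- cis_add, S_INR; f_equal; ring.
Qed.

Lemma cis_2PI_INR (m : nat) : cis (2 * PI * INR m) = 1%C.
Proof.
  replace (2 * PI * INR m) with (0 + 2 * INR m * PI) by ring.
  unfold cis; rewrite cos_period, sin_period, cos_0, sin_0; reflexivity.
Qed.

Lemma cis_eq_1 t : cis t = 1%C -> exists z : Z, t = 2 * PI * IZR z.
Proof.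
  intros Ht; injection Ht as Hcos _.
  assert (Hsin : sin (t / 2) = 0).
  { replace t with (2 * (t / 2)) in Hcos by field.
    rewrite cos_2a_sin in Hcos; nra. }
  destruct (sin_eq_0_0 _ Hsin) as [z Hz]; exists z; lra.
Qed.

Lemma sum_n_Cpow_root_of_unity (u : C) (n : nat) :
  (u ^ S n)%C = 1%C -> u <> 1%C -> sum_n (fun j => u ^ j)%C n = RtoC 0.
Proof.
  intros Hroot Hu.
  assert (Hgeom : forall p, (sum_n (fun j => u ^ j)%C p * (u - 1))%C = (u ^ S p - 1)%C).
  { induction p as [|p IH].
    - rewrite sum_O; simpl; ring.
    - rewrite sum_Sn; change plus with Cplus.
      transitivity (sum_n (fun j => u ^ j)%C p * (u - 1) + u ^ S p * (u - 1))%C;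
        [ring | rewrite IH; simpl; ring]. }
  assert (Hu1 : (u - 1)%C <> RtoC 0).
  { intros E; apply Hu; replace u with (u - 1 + 1)%C by ring; rewrite E; ring. }
  apply Cmod_eq_0, (Rmult_eq_reg_r (Cmod (u - 1))).
  - rewrite <- Cmod_mult, Hgeom, Hroot, Rmult_0_l.
    replace (1 - 1)%C with (RtoC 0) by ring; apply Cmod_0.
  - apply Cmod_gt_0 in Hu1; lra.
Qed.

Definition root_angle (n j : nat) : R := 2 * PI * INR j / INR (S n).

Lemma sum_n_cis_root_angle (n m k : nat) : (m <= n)%nat -> (k <= n)%nat -> m <> k ->
  sum_n (fun j => cis ((INR m - INR k) * root_angle n j)) n = RtoC 0.
Proof.
  intros Hm Hk Hmk.
  assert (HN : 0 < INR (S n)) by (apply lt_0_INR; lia).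
  pose proof PI_RGT_0.
  set (u := cis (2 * PI * (INR m - INR k) / INR (S n))).
  rewrite (sum_n_ext _ (fun j => u ^ j)%C).
  2: { intros j; unfold u, root_angle; rewrite Cpow_cis; f_equal; field; lra. }
  apply sum_n_Cpow_root_of_unity.
  - unfold u; rewrite Cpow_cis.
    assert (Hm_split : cis (2 * PI * INR m)
      = (cis (INR (S n) * (2 * PI * (INR m - INR k) / INR (S n))) * cis (2 * PI * INR k))%C)
      by (rewrite <- cis_add; f_equal; field; lra).
    rewrite !cis_2PI_INR, Cmult_1_r in Hm_split; symmetry; exact Hm_split.
  - intros Hu; destruct (cis_eq_1 _ Hu) as [z Hz].
    assert (Hdiv : INR m - INR k = IZR z * INR (S n)).
    { apply Rmult_eq_reg_l with (2 * PI / INR (S n)).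
      - transitivity (2 * PI * IZR z); [rewrite <- Hz |]; field; lra.
      - assert (0 < 2 * PI / INR (S n)) by (apply Rdiv_lt_0_compat; lra); lra. }
    rewrite !INR_IZR_INZ, <- minus_IZR, <- mult_IZR in Hdiv; apply eq_IZR in Hdiv.
    destruct (Z.lt_trichotomy z 0) as [Hz0 | [-> | Hz0]]; nia.
Qed.

(** * Cauchy's estimate *)

Definition circle_point (r : R) (n j : nat) : C := (RtoC r * cis (root_angle n j))%C.

Lemma Cmod_circle_point (r : R) (n j : nat) : 0 <= r -> Cmod (circle_point r n j) = r.
Proof.
  intros Hr; unfold circle_point.
  rewrite Cmod_mult, Cmod_cis, Cmod_R, Rabs_pos_eq; lra.
Qed.

Lemma is_series_circle_average (h : nat -> C) (r : R) (n k : nat) (s : nat -> C) :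
  (forall j, ps_sum h (circle_point r n j) (s j)) ->
  is_series
    (fun m => (h m * RtoC (r ^ m) * sum_n (fun j => cis ((INR m - INR k) * root_angle n j)) n)%C)
    (sum_n (fun j => cis (- INR k * root_angle n j) * s j)%C n).
Proof.
  intros Hs.
  assert (Hterm : forall m j,
    (cis (- INR k * root_angle n j) * (h m * circle_point r n j ^ m))%C
    = (h m * RtoC (r ^ m) * cis ((INR m - INR k) * root_angle n j))%C).
  { intros m j; unfold circle_point; rewrite Cpow_mult_l, Cpow_cis, <- RtoC_pow.
    replace ((INR m - INR k) * root_angle n j)
      with (- INR k * root_angle n j + INR m * root_angle n j) by ring.
    rewrite cis_add; ring. }
  eapply is_series_ext; [| apply (is_series_sum_n
    (fun j m => cis (- INR k * root_angle n j) * (h m * pow_n (circle_point r n j) m))%C)].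
  - intros m; rewrite <- sum_n_Cmult_l; apply sum_n_ext; intros j; apply Hterm.
  - intros j; apply (is_series_scal (K := C_AbsRing) (V := C_NormedModule)), Hs.
Qed.

Lemma cauchy_estimate_circle (h : nat -> C) (r B T : R) (n k : nat) (s : nat -> C) :
  0 <= r -> (k <= n)%nat ->
  (forall j, ps_sum h (circle_point r n j) (s j)) ->
  (forall j, Cmod (s j) <= B) ->
  is_series (fun i => Cmod (h (S n + i)%nat) * r ^ (S n + i)) T ->
  Cmod (h k) * r ^ k <= B + T.
Proof.
  intros Hr Hkn Hs HB HT.
  set (E := fun m => sum_n (fun j => cis ((INR m - INR k) * root_angle n j)) n).
  set (a := fun m => (h m * RtoC (r ^ m) * E m)%C).
  set (A := sum_n (fun j => cis (- INR k * root_angle n j) * s j)%C n).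
  assert (HN : 0 < INR (S n)) by (apply lt_0_INR; lia).
  assert (HE : forall m, Cmod (E m) <= INR (S n)).
  { intros m; eapply Rle_trans; [apply (Cmod_sum_n_le _ (fun _ => 1)) |].
    - intros j; rewrite Cmod_cis; lra.
    - rewrite sum_n_const; lra. }
  assert (HEk : E k = RtoC (INR (S n))).
  { unfold E; rewrite (sum_n_ext _ (fun _ => RtoC 1)).
    - rewrite sum_n_RtoC, sum_n_const, Rmult_1_r; reflexivity.
    - intros j; rewrite Rminus_diag, Rmult_0_l; apply cis_0. }
  assert (Hhead : @eq C (sum_n a n) (RtoC (INR (S n)) * (h k * RtoC (r ^ k)))%C).
  { rewrite (sum_n_single a n k Hkn).
    - unfold a; rewrite HEk; ring.
    - intros m Hm Hmk; unfold a, E; rewrite sum_n_cis_root_angle by assumption; apply Cmult_0_r. }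
  set (head := (RtoC (INR (S n)) * (h k * RtoC (r ^ k)))%C) in Hhead.
  assert (Htail : is_series (fun i => a (S n + i)%nat) (A - head)%C).
  { assert (HA : @eq C (A - head + sum_n a n)%C A) by (rewrite Hhead; ring).
    apply is_series_incr_n; [lia |].
    change (is_series a (A - head + sum_n a n)%C); rewrite HA.
    exact (is_series_circle_average h r n k s Hs). }
  assert (HAB : Cmod A <= INR (S n) * B).
  { eapply Rle_trans; [apply (Cmod_sum_n_le _ (fun _ => B)) |].
    - intros j; rewrite Cmod_mult, Cmod_cis, Rmult_1_l; apply HB.
    - rewrite sum_n_const; lra. }
  assert (Htail_le : Cmod (A - head) <= INR (S n) * T).
  { apply (is_series_Cmod_le _ _ _ _ Htail (is_series_scal_l _ _ _ HT)).
    intros i; unfold a.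
    rewrite !Cmod_mult, Cmod_R, Rabs_pos_eq by (apply pow_le; lra).
    change scal with Rmult; rewrite (Rmult_comm (INR (S n))).
    apply Rmult_le_compat_l; [| apply HE].
    apply Rmult_le_pos; [apply Cmod_ge_0 | apply pow_le; lra]. }
  assert (Hhead_mod : Cmod head = INR (S n) * (Cmod (h k) * r ^ k)).
  { unfold head; rewrite !Cmod_mult, !Cmod_R, !Rabs_pos_eq;
      [reflexivity | apply pow_le | apply pos_INR]; lra. }
  assert (Hsplit : Cmod head <= Cmod A + Cmod (A - head)).
  { replace head with (A - (A - head))%C at 1 by ring.
    eapply Rle_trans; [apply Cmod_triangle | rewrite Cmod_opp; lra]. }
  apply (Rmult_le_reg_l (INR (S n))); lra.
Qed.

Lemma analytic_on_disc_abs_summable (h : nat -> C) (r : R) :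
  analytic_on_disc h -> 0 <= r < 1 -> ex_series (fun m => Cmod (h m) * r ^ m).
Proof.
  intros Ha Hr.
  set (rho := (1 + r) / 2).
  assert (Hrho : r < rho < 1) by (unfold rho; lra).
  destruct (Ha (RtoC rho)) as [s Hs].
  { unfold in_disc; rewrite Cmod_R, Rabs_pos_eq; lra. }
  destruct (is_series_Cmod_bounded _ _ Hs) as [K HK].
  set (q := r / rho).
  assert (Hq : 0 <= q < 1).
  { unfold q; split; [apply Rdiv_le_0_compat; lra |].
    apply (Rmult_lt_reg_r rho); [lra |].
    unfold Rdiv; rewrite Rmult_assoc, Rinv_l, Rmult_1_r; lra. }
  apply (@ex_series_le R_AbsRing R_CompleteNormedModule _ (fun m => K * q ^ m)).
  - intros m; change norm with Rabs.
    rewrite Rabs_pos_eq by (apply Rmult_le_pos; [apply Cmod_ge_0 | apply pow_le; lra]).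
    specialize (HK m); change (pow_n (RtoC rho) m) with (RtoC rho ^ m)%C in HK.
    rewrite Cmod_mult, Cmod_pow, Cmod_R, Rabs_pos_eq in HK by lra.
    replace r with (rho * q) by (unfold q; field; lra).
    rewrite Rpow_mult_distr, <- Rmult_assoc.
    apply Rmult_le_compat_r; [apply pow_le; lra | exact HK].
  - apply (ex_series_scal (V := R_NormedModule) K), ex_series_geom.
    rewrite Rabs_pos_eq; lra.
Qed.

Lemma cauchy_estimate (h : nat -> C) (B r : R) (k : nat) :
  analytic_on_disc h -> (forall z s, in_disc z -> ps_sum h z s -> Cmod s <= B) ->
  0 <= r < 1 -> Cmod (h k) * r ^ k <= B.
Proof.
  intros Ha HB Hr.
  destruct (analytic_on_disc_abs_summable h r Ha Hr) as [L HL]; change R in L.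
  set (b := fun m => Cmod (h m) * r ^ m) in HL.
  apply Rle_plus_epsilon; intros eps Heps.
  destruct (HL _ (locally_ball L (mkposreal eps Heps))) as [N HN].
  set (n := Nat.max N k).
  assert (Hn : Rabs (sum_n b n - L) < eps) by exact (HN n (Nat.le_max_l N k)).
  assert (Hdisc : forall j, in_disc (circle_point r n j)).
  { intros j; unfold in_disc; rewrite Cmod_circle_point; lra. }
  destruct (functional_choice (fun j s => ps_sum h (circle_point r n j) s)) as [s Hs].
  { intros j; apply Ha, Hdisc. }
  assert (Htail : is_series (fun i => b (S n + i)%nat) (L - sum_n b n)).
  { apply is_series_incr_n; [lia |].
    change (is_series b (L - sum_n b n + sum_n b n)).
    replace (L - sum_n b n + sum_n b n) with L by ring; exact HL. }
  eapply Rle_trans.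
  - apply (cauchy_estimate_circle h r B (L - sum_n b n) n k s); [lra | lia | exact Hs | | exact Htail].
    intros j; apply (HB _ _ (Hdisc j) (Hs j)).
  - apply Rplus_le_compat_l; apply Rabs_lt_between' in Hn; lra.
Qed.

Lemma one_minus_pow_ge (x : R) (n : nat) : 0 <= x <= 1 -> 1 - INR n * x <= (1 - x) ^ n.
Proof.
  intros Hx; induction n as [|n IH]; [simpl; lra |].
  rewrite S_INR; change ((1 - x) ^ S n) with ((1 - x) * (1 - x) ^ n).
  assert (0 <= INR n * x * x) by (apply Rmult_le_pos; [apply Rmult_le_pos; [apply pos_INR |] |]; lra).
  nra.
Qed.

Lemma Hinf_coef_le (h : nat -> C) (B : R) :
  analytic_on_disc h -> (forall z s, in_disc z -> ps_sum h z s -> Cmod s <= B) ->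
  forall k, Cmod (h k) <= B.
Proof.
  intros Ha HB k.
  apply Rle_plus_epsilon; intros eps Heps.
  set (X := Cmod (h k) * INR k).
  assert (HX : 0 <= X) by (apply Rmult_le_pos; [apply Cmod_ge_0 | apply pos_INR]).
  set (d := Rmin (1 / 2) (eps / (X + 1))).
  assert (Hd : 0 < d <= 1 / 2).
  { unfold d; split; [apply Rmin_pos; [lra | apply Rdiv_lt_0_compat; lra] | apply Rmin_l]. }
  assert (HdX : d * X <= eps).
  { assert (d * (X + 1) <= eps).
    { apply (Rle_trans _ (eps / (X + 1) * (X + 1))).
      - apply Rmult_le_compat_r; [lra | apply Rmin_r].
      - right; field; lra. }
    nra. }
  pose proof (cauchy_estimate h B (1 - d) k Ha HB ltac:(lra)) as Hest.
  pose proof (one_minus_pow_ge d k ltac:(lra)) as Hpow.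
  pose proof (Cmod_ge_0 (h k)).
  unfold X in HdX; nra.
Qed.

(** * Summability of [exp (- a sqrt k)] *)

Lemma sum_n_inv_consecutive (n : nat) :
  sum_n (fun k => / ((INR k + 1) * (INR k + 2))) n + / (INR n + 2) = 1.
Proof.
  induction n as [|n IH].
  - rewrite sum_O; simpl; field.
  - rewrite sum_Sn; change plus with Rplus; rewrite S_INR.
    assert (0 <= INR n) by apply pos_INR.
    replace (sum_n _ n) with (1 - / (INR n + 2)) by lra.
    field; lra.
Qed.

Lemma ex_series_inv_consecutive : ex_series (fun k => / ((INR k + 1) * (INR k + 2))).
Proof.
  assert (Hpos : forall k, 0 < / ((INR k + 1) * (INR k + 2))).
  { intros k; pose proof (pos_INR k); apply Rinv_0_lt_compat; nra. }
  destruct (ex_finite_lim_seq_incr (sum_n (fun k => / ((INR k + 1) * (INR k + 2)))) 1)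
    as [l Hl].
  - intros n; rewrite sum_Sn; change plus with Rplus; pose proof (Hpos (S n)); lra.
  - intros n; pose proof (sum_n_inv_consecutive n); pose proof (pos_INR n).
    assert (0 < / (INR n + 2)) by (apply Rinv_0_lt_compat; lra); lra.
  - exists l; exact Hl.
Qed.

Lemma exp_ge_quartic (x : R) : 0 <= x -> 1 + x ^ 4 / 256 <= exp x.
Proof.
  intros Hx.
  replace (exp x) with (exp (x / 4) ^ 4)
    by (simpl; rewrite Rmult_1_r, <- !exp_plus; f_equal; field).
  pose proof (exp_ineq1_le (x / 4)).
  assert ((1 + x / 4) ^ 4 <= exp (x / 4) ^ 4) by (apply pow_incr; lra).
  assert (1 + x ^ 4 / 256 <= (1 + x / 4) ^ 4) by (simpl; nra).
  lra.
Qed.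

(* The constant comes from [exp x >= 1 + x ^ 4 / 256] and [(k + 1) (k + 2) <= 2 + 6 k ^ 2]. *)
Lemma exp_neg_sqrt_le (a : R) (k : nat) : 0 < a ->
  exp (- (a * sqrt (INR k))) <= (2 + 1536 / a ^ 4) / ((INR k + 1) * (INR k + 2)).
Proof.
  intros Ha.
  set (x := a * sqrt (INR k)).
  assert (Hk : 0 <= INR k) by apply pos_INR.
  assert (Hx : 0 <= x) by (apply Rmult_le_pos; [lra | apply sqrt_pos]).
  assert (Hx4 : x ^ 4 = a ^ 4 * INR k ^ 2).
  { unfold x; rewrite <- (sqrt_sqrt (INR k)) at 2 by exact Hk; ring. }
  assert (Ha4 : 0 < a ^ 4) by (apply pow_lt; lra).
  assert (Hk2 : 3 * INR k <= 5 * INR k ^ 2).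
  { destruct k as [|k]; [simpl; lra |].
    rewrite S_INR; pose proof (pos_INR k); nra. }
  assert (HC : 0 < 1536 / a ^ 4) by (apply Rdiv_lt_0_compat; lra).
  set (C := 2 + 1536 / a ^ 4).
  set (D := (INR k + 1) * (INR k + 2)).
  assert (HD : 0 < D) by (unfold D; nra).
  assert (Hden : D <= C * (1 + x ^ 4 / 256)).
  { unfold C, D; rewrite Hx4.
    replace ((2 + 1536 / a ^ 4) * (1 + a ^ 4 * INR k ^ 2 / 256))
      with (2 + 1536 / a ^ 4 + a ^ 4 * INR k ^ 2 / 128 + 6 * INR k ^ 2) by (field; lra).
    assert (0 <= a ^ 4 * INR k ^ 2 / 128)
      by (apply Rmult_le_pos; [apply Rmult_le_pos; [lra | apply pow_le; lra] | lra]).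
    nra. }
  pose proof (exp_ge_quartic x Hx) as Hexp.
  pose proof (exp_pos x) as Hexp_pos.
  rewrite exp_Ropp.
  apply (Rmult_le_reg_l (exp x * D)); [apply Rmult_lt_0_compat; lra |].
  replace (exp x * D * / exp x) with D by (field; lra).
  replace (exp x * D * (C / D)) with (C * exp x) by (field; lra).
  assert (0 < C) by (unfold C; lra).
  nra.
Qed.

Lemma ex_series_exp_neg_sqrt (a : R) : 0 < a -> ex_series (fun k => exp (- (a * sqrt (INR k)))).
Proof.
  intros Ha.
  apply (@ex_series_le R_AbsRing R_CompleteNormedModule _
    (fun k => (2 + 1536 / a ^ 4) * / ((INR k + 1) * (INR k + 2)))).
  - intros k; change norm with Rabs; rewrite Rabs_pos_eq by (left; apply exp_pos).
    apply exp_neg_sqrt_le, Ha.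
  - apply (ex_series_scal (V := R_NormedModule)), ex_series_inv_consecutive.
Qed.

(** * Toeplitz coefficients *)

Lemma sqrt_add_le (x y : R) : 0 <= x -> 0 <= y -> sqrt x + sqrt y <= 2 * sqrt (x + y).
Proof.
  intros Hx Hy.
  assert (sqrt x <= sqrt (x + y)) by (apply sqrt_le_1_alt; lra).
  assert (sqrt y <= sqrt (x + y)) by (apply sqrt_le_1_alt; lra).
  lra.
Qed.

Lemma subexp_decay_bound (a : nat -> C) (c : R) : subexp_decay a c ->
  exists M, forall n, Cmod (a n) <= M * exp (- (c * sqrt (INR n))).
Proof.
  intros [M HM]; exists M; intros n.
  pose proof (exp_pos (c * sqrt (INR n))).
  rewrite exp_Ropp; apply (Rmult_le_reg_r (exp (c * sqrt (INR n)))); [lra |].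
  rewrite Rmult_assoc, Rinv_l, Rmult_1_r by lra; apply HM.
Qed.

Lemma toeplitz_coef_decay (f h : nat -> C) (c H M : R) : 0 < c ->
  (forall k, Cmod (h k) <= H) -> (forall m, Cmod (f m) <= M * exp (- (c * sqrt (INR m)))) ->
  exists g, (forall n, toeplitz_coef h f n (g n)) /\ subexp_decay g (c / 2).
Proof.
  intros Hc Hh Hf.
  assert (HH : 0 <= H) by (eapply Rle_trans; [apply Cmod_ge_0 | apply (Hh 0%nat)]).
  assert (HM : 0 <= M).
  { pose proof (Rle_trans _ _ _ (Cmod_ge_0 _) (Hf 0%nat)) as H0.
    pose proof (exp_pos (- (c * sqrt (INR 0)))); nra. }
  set (w := fun n => exp (- (c / 2 * sqrt (INR n)))).
  destruct (ex_series_exp_neg_sqrt (c / 2) ltac:(lra)) as [L HL]; change R in L.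
  set (bound := fun n k => H * M * w n * w k).
  assert (Hterm : forall n k, Cmod (Cconj (h k) * f (n + k)%nat) <= bound n k).
  { intros n k; rewrite Cmod_mult, Cmod_conj.
    assert (Hexp : exp (- (c * sqrt (INR (n + k)))) <= w n * w k).
    { unfold w; rewrite <- exp_plus, plus_INR.
      pose proof (sqrt_add_le (INR n) (INR k) (pos_INR n) (pos_INR k)).
      destruct (Rle_lt_or_eq_dec (- (c * sqrt (INR n + INR k)))
                  (- (c / 2 * sqrt (INR n)) + - (c / 2 * sqrt (INR k)))) as [Hlt | ->];
        [nra | left; apply exp_increasing, Hlt | right; reflexivity]. }
    unfold bound; rewrite (Rmult_assoc (H * M)), Rmult_assoc.
    apply Rmult_le_compat; [apply Cmod_ge_0 | apply Cmod_ge_0 | apply Hh |].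
    eapply Rle_trans; [apply Hf | apply Rmult_le_compat_l; assumption]. }
  assert (Hrow : forall n, is_series (bound n) (H * M * w n * L)).
  { intros n; eapply is_series_ext;
      [| apply (is_series_scal (K := R_AbsRing) (V := R_NormedModule) (H * M * w n) _ _ HL)].
    reflexivity. }
  destruct (functional_choice (fun n v => toeplitz_coef h f n v)) as [g Hg].
  { intros n; apply (@ex_series_le C_AbsRing C_CompleteNormedModule _ (bound n)).
    - intros k; apply Hterm.
    - exists (H * M * w n * L); apply Hrow. }
  exists g; split; [exact Hg |].
  exists (H * M * L); intros n.
  pose proof (is_series_Cmod_le _ _ _ _ (Hg n) (Hrow n) (Hterm n)) as Hgn.
  assert (Hw : w n * exp (c / 2 * sqrt (INR n)) = 1)
    by (unfold w; rewrite <- exp_plus, Rplus_opp_l; apply exp_0).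
  apply (Rmult_le_compat_r (exp (c / 2 * sqrt (INR n)))) in Hgn; [| left; apply exp_pos].
  replace (H * M * w n * L * exp (c / 2 * sqrt (INR n)))
    with (H * M * L * (w n * exp (c / 2 * sqrt (INR n)))) in Hgn by ring.
  rewrite Hw, Rmult_1_r in Hgn; exact Hgn.
Qed.

Theorem mainTheorem15 (f h : nat -> Complex.C) (c : R) :
  analytic_on_disc f -> 0 < c -> subexp_decay f c -> Hinf h ->
  exists g : nat -> Complex.C,
    (forall n : nat, toeplitz_coef h f n (g n)) /\
    exists c2 : R, 0 < c2 /\ subexp_decay g c2.
Proof.
  (* Analyticity of [f] already follows from the decay of its coefficients. *)
  intros _ Hc Hf [Hh_analytic [B HB]].
  destruct (subexp_decay_bound f c Hf) as [M HM].
  pose proof (Hinf_coef_le h B Hh_analytic HB) as Hh.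
  destruct (toeplitz_coef_decay f h c B M Hc Hh HM) as [g [Hg Hdecay]].
  exists g; split; [exact Hg |].
  exists (c / 2); split; [lra | exact Hdecay].
Qed.
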